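(* Let particles occupy a finite connected set of nodes of the triangular grid, where every particle has ports $0,\dots,5$ with port $0$ leading East and port $3$ leading West for all particles, and ports $i$, $i+1 \bmod 6$ leading to adjacent nodes, the circular orientation of the other ports possibly differing between particles. Let $G$ be a grey component, and let $\{p,p'\}$ be a pair of particles of $G$ that are neighbours on at least one boundary of $G$, where boundaries of $G$ are taken with both endpoints of every dark blue edge treating the other endpoint as a non-particle node. Suppose every particle forwards messages along boundaries by the following procedure. If $p_s,p_1,p_2$ are consecutive particles on a boundary $B$, $o_1$ is the common non-particle neighbour of $p_s,p_1$ on $B$ and $o_2$ the common non-particle neighbour of $p_1,p_2$ on $B$, then when $p_s$ sends a message to $p_1$ it attaches as boundary-label the label, in $p_1$'s own port numbering, of the port of $p_1$ leading to $o_1$. When $p_1$ receives the message through its port $z$, it takes as next particle the first particle reached when following its ports in the cyclic order $z$, boundary-label, $\dots$ (call it $p_2$); it determines whether it has the same chirality as $p_2$ (via port labels of the edge $p_1p_2$ if it is a grey edge, or via the common occupied neighbour if it is a light blue edge). Letting $x$ be the port of $p_1$ to $p_2$, $y$ the port of $p_2$ to $p_1$, and $i$ the port of $p_1$ to $o_2$, $p_1$ computes $j = y+1 \bmod 6$ if ($p_1,p_2$ have the same chirality and $i = x-1 \bmod 6$) or (they have different chirality and $i = x+1 \bmod 6$), and $j = y-1 \bmod 6$ otherwise; it then sends the message to $p_2$ with boundary-label $j$. A particle originating a message chooses the boundary on which it sends it and attaches the boundary-label accordingly. Then any message passed from $p$ to $p'$ by this procedure always remains on the same boundary, i.e., the boundary-label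 received by $p'$ is the label (in $p'$'s numbering) of the port of $p'$ leading to the common non-particle neighbour of $p$ and $p'$ defining the boundary on which the message is being forwarded.
   Context: A local boundary is a pair $(uv,o)$ where $uv$ is an edge between particle nodes and $o$ is a non-particle node adjacent to both $u$ and $v$. A boundary is a cyclic sequence of local boundaries $(u_1u_2,o_1),(u_2u_3,o_2),\dots,(u_ku_1,o_k)$ such that, rotating around $u_i$ from $u_{i-1}$ to $u_{i+1}$, only non-particle nodes are encountered, starting with $o_{i-1}$ and ending with $o_i$ (possibly $o_{i-1}=o_i$); $u,v$ with $(uv,o)$ on it are neighbours on the boundary. A horizontal path consists of particles that lie on at least one boundary and are connected through their ports $0$ and $3$. An edge of a horizontal path between two particles with no common neighbouring particle is a dark blue edge; an edge of a horizontal path between two particles with exactly one common neighbouring particle is a light blue edge; all other edges between particles are grey edges. A grey component is a maximal set of particles connected by grey and light blue edges (not using dark blue edges). Two particles joined by a grey edge through ports $i$ and $i'$ have the same chirality iff $i+3 \equiv i' \pmod 6$. *)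

From HB Require Import structures.
From mathcomp Require Import all_boot all_order all_algebra.
From mathcomp Require Import boolp.
Set Implicit Arguments. Unset Strict Implicit. Unset Printing Implicit Defensive.
Import Order.TTheory GRing.Theory Num.Theory.
Local Open Scope ring_scope.

(* Nodes of the triangular grid in axial coordinates. *)
Definition node := (int * int)%type.

(* The six directions, counterclockwise starting from East:
   0 = E, 1 = NE, 2 = NW, 3 = W, 4 = SW, 5 = SE. *)
Definition dir (d : 'I_6) : int * int :=
  match val d with
  | 0%N => (1, 0) | 1%N => (0, 1) | 2%N => (-1, 1)
  | 3%N => (-1, 0) | 4%N => (0, -1) | _ => (1, -1)
  end.

Definition addN (u : node) (d : 'I_6) : node := (u.1 + (dir d).1, u.2 + (dir d).2).

Definition adj (u v : node) : bool := [exists d : 'I_6, v == addN u d].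

(* the direction d with v = u + dir d (junk 0 if not adjacent) *)
Definition dirTo (u v : node) : 'I_6 := odflt 0 [pick d : 'I_6 | v == addN u d].

Definition rotN (c : node) (d : 'I_6) (s : bool) (t : nat) : node :=
  addN c (d + (if s then t%:R else - t%:R)).

Section Boundaries.
(* S : the particle nodes; occ u v : node v is seen as a particle by u. *)
Variables (S : seq node) (occ : node -> node -> bool).

Definition localBoundary (u v o : node) : bool :=
  [&& u \in S, v \in S, adj u v, occ u v, occ v u,
      adj u o, adj v o, ~~ occ u o & ~~ occ v o].

(* a boundary is a cyclic sequence [(u_1,o_1); ...; (u_k,o_k)] standing for
   the local boundaries (u_1u_2,o_1), ..., (u_ku_1,o_k) *)
Definition bu (B : seq (node * node)) (j : nat) : node :=
  (nth (0, 0) B (j %% size B)).1.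
Definition bo (B : seq (node * node)) (j : nat) : node :=
  (nth (0, 0) B (j %% size B)).2.

Definition isBoundary (B : seq (node * node)) : Prop :=
  (0 < size B)%N /\
  forall j, (j < size B)%N ->
    localBoundary (bu B j) (bu B j.+1) (bo B j) /\
    (* rotating around u_{j+1} from u_j to u_{j+2}: only non-particle nodes,
       starting with o_j and ending with o_{j+1} *)
    exists (s : bool) (m : nat),
      (2 <= m <= 6)%N /\
      let c := bu B j.+1 in let d := dirTo c (bu B j) in
      [/\ rotN c d s 1 = bo B j, rotN c d s m.-1 = bo B j.+1,
          rotN c d s m = bu B j.+2 &
          forall t, (1 <= t < m)%N -> ~~ occ c (rotN c d s t)].

Definition onBoundary (u : node) : Prop :=
  exists B, isBoundary B /\ exists2 j, (j < size B)%N & bu B j = u.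

End Boundaries.

Section Particles.
(* P : the particles; portDir u k : the direction of the node port k of u
   leads to. *)
Variables (P : seq node) (portDir : node -> 'I_6 -> 'I_6).

Definition nbp (u : node) (k : 'I_6) : node := addN u (portDir u k).

(* the port of u leading to v (junk 0 if none) *)
Definition portTo (u v : node) : 'I_6 := odflt 0 [pick k : 'I_6 | nbp u k == v].

(* boundaries of the whole configuration *)
Definition fullOcc (_ v : node) : bool := v \in P.

Definition horizEdge (u v : node) : Prop :=
  [/\ u \in P, v \in P, onBoundary P fullOcc u, onBoundary P fullOcc v &
      (nbp u 0 == v) && (nbp v 3 == u) \/ (nbp v 0 == u) && (nbp u 3 == v)].

Definition ncommon (u v : node) : nat :=
  count (fun w => adj u w && adj v w) (undup P).

Definition darkBlue (u v : node) : Prop := horizEdge u v /\ ncommon u v = 0%N.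
Definition lightBlue (u v : node) : Prop := horizEdge u v /\ ncommon u v = 1%N.

(* G is a grey component: a maximal set of particles connected by grey and
   light blue edges, i.e. by edges between particles that are not dark blue *)
Definition nonDarkEdge (G : seq node) (u v : node) : Prop :=
  [/\ u \in G, v \in G, adj u v & ~ darkBlue u v].

Definition greyComponent (G : seq node) : Prop :=
  [/\ G != [::], {subset G <= P},
      (forall u v, u \in G -> v \in G ->
         exists s : seq node,
           [/\ all (fun w => w \in G) s,
               (forall k, (k < size s)%N ->
                  ~ darkBlue (nth u (u :: s) k) (nth u s k)
                  /\ adj (nth u (u :: s) k) (nth u s k)) &
               last u s = v]) &
      (forall u v, u \in G -> v \in P -> adj u v -> ~ darkBlue u v -> v \in G)].

Variable G : seq node.

(* boundaries of G: both endpoints of a dark blue edge see each other as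
   non-particle nodes *)
Definition occG (u v : node) : bool :=
  (v \in G) && ~~ `[< darkBlue u v >].

(* chirality test through a grey edge *)
Definition greyTest (a b : node) : bool := portTo a b + 3 == portTo b a.

(* message state: (sender, receiver, boundary-label) *)
Definition msg := (node * node * 'I_6)%type.

Definition step (st : msg) : msg :=
  let: (ps, p1, lbl) := st in
  let z := portTo p1 ps in
  let sg := lbl - z in                      (* direction of the cyclic order *)
  let portAt (t : nat) := z + sg *+ t in    (* z, label, ... *)
  let t := (find (fun t => occG p1 (nbp p1 (portAt t))) (iota 1 6)).+1 in
  let x := portAt t in
  let p2 := nbp p1 x in
  let y := portTo p2 p1 in
  let i := portAt t.-1 in                   (* port of p1 to o2 *)
  let same :=
    if `[< lightBlue p1 p2 >] then
      let w := if nbp p1 (x + 1) \in P then nbp p1 (x + 1) else nbp p1 (x - 1) in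
      greyTest p1 w == greyTest w p2
    else greyTest p1 p2 in
  let j := if (same && (i == x - 1)) || (~~ same && (i == x + 1))
           then y + 1 else y - 1 in
  (p1, p2, j).

Definition initMsg (B : seq (node * node)) (i0 : nat) : msg :=
  (bu B i0, bu B i0.+1, portTo (bu B i0.+1) (bo B i0)).

Fixpoint traj (st : msg) (n : nat) : msg :=
  if n is n'.+1 then step (traj st n') else st.

End Particles.

Definition configOK (P : seq node) (portDir : node -> 'I_6 -> 'I_6) : Prop :=
  [/\ P != [::],
      (forall u v, u \in P -> v \in P ->
         exists s : seq node,
           [/\ all (fun w => w \in P) s, path adj u s & last u s = v]),
      (forall u, u \in P -> injective (portDir u)),
      (forall u, u \in P -> portDir u 0 = 0 /\ portDir u 3 = 3) &
      (forall u, u \in P -> forall k : 'I_6, adj (nbp portDir u k) (nbp portDir u (k + 1)))].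

(* Since port 0 leads East, port 3 West and consecutive ports lead to adjacent
   directions, the port numbering of every particle is k |-> e * k in Z/6, where the
   chirality e is 1 or -1.  When u sends along a boundary of G to v = u + dir d, it labels
   the port of v towards the non-particle node o = v + dir (d + sg); scanning the ports of
   v from z through that label therefore rotates around v exactly as the boundary does,
   so the first node v sees as a particle is the next particle w = v + dir D of the
   boundary, and the node just before it is the next non-particle node v + dir (D - sg).
   The chirality comparison of v and w is correct: on a grey edge the port labels compare
   chiralities directly; a horizontal edge on a boundary of G is not dark blue, its
   non-particle side lies outside the configuration, so the edge lies on a boundary of the
   whole configuration and is light blue, and its only common particle neighbour is joined
   to both ends by grey edges.  With the right comparison the rule j = y +- 1 gives the
   port of w towards v + dir (D - sg), and induction along the boundary concludes. *)

From mathcomp Require Import all_boot all_algebra.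
From mathcomp Require Import ring zify boolp.

Set Implicit Arguments. Unset Strict Implicit. Unset Printing Implicit Defensive.
Import GRing.Theory.
Local Open Scope ring_scope.

Ltac case_I6 a := case: a => [[|[|[|[|[|[|?]]]]]] ?] //.

(** * First indices and periodic orbits *)

Section FindIota.
Variables (a : pred nat) (n m : nat).
Hypotheses (m_range : (0 < m <= n)%N) (am : a m).

Local Notation k := (find a (iota 1 n)).+1.

Lemma find_iota1 : [/\ (k <= m)%N, a k & forall t, (0 < t < k)%N -> ~~ a t].
Proof.
have a_in : has a (iota 1 n) by apply/hasP; exists m; rewrite // mem_iota add1n ltnS.
have := a_in; rewrite has_find size_iota => k_le_n.
have before t : (0 < t < k)%N -> ~~ a t.
  move=> /andP[t0 tk]; have := before_find 0%N (_ : t.-1 < find a (iota 1 n))%N.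
  by rewrite nth_iota ?add1n ?prednK //; lia.
split => //; last by have := nth_find 0%N a_in; rewrite nth_iota ?add1n //; lia.
by rewrite leqNgt; apply/negP => mk; move: am; apply/negP/before; lia.
Qed.

Lemma find_iota1_first : (forall t, (0 < t < m)%N -> ~~ a t) -> k = m.
Proof.
move=> before_m; have [km ak _] := find_iota1.
by apply/eqP; rewrite eqn_leq km leqNgt; apply: contraL ak => kltm; apply: before_m.
Qed.

End FindIota.

Lemma iter_periodic (T : eqType) (V : pred T) (L : seq T) (f g : T -> T) :
  (forall x, V x -> x \in L) -> (forall x, V x -> V (f x)) ->
  (forall x, V x -> g (f x) = x) ->
  forall x, V x -> exists2 k, (0 < k)%N & iter k f x = x.
Proof.
move=> VL Vf fK x Vx.
have Vi i : V (iter i f x) by elim: i => //= i; apply: Vf.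
have : ~~ uniq [seq iter i f x | i <- iota 0 (size L).+1].
  apply: contraT => /negbNE /uniq_leq_size /(_ _) leL.
  have /leL : {subset [seq iter i f x | i <- iota 0 (size L).+1] <= L}.
    by move=> y /mapP[i _ ->]; apply/VL/Vi.
  by rewrite size_map size_iota ltnn.
case/(uniqPn x) => i [j []]; rewrite size_map size_iota => ij jL.
rewrite !(nth_map 0%N) ?size_iota ?nth_iota ?add0n //; try lia; move=> iterij.
have shift l : iter l f x = iter (l + (j - i)) f x -> x = iter (j - i) f x.
  elim: l => // l IH; rewrite addSn !iterS => /(congr1 g).
  by rewrite !fK //; apply: Vi.
by exists (j - i)%N; [lia | rewrite -(shift i) // subnKC // ltnW].
Qed.

(** * Directions of the triangular grid *)

Definition pm1 (e : 'I_6) : bool := (e == 1) || (e == -1).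

Definition horizontal (d : 'I_6) : bool := (d == 0) || (d == 3).

Lemma pm1_sqr e : pm1 e -> e * e = 1.
Proof. by case/orP=> /eqP ->; rewrite ?mulr1 ?mulrNN ?mulr1. Qed.

Lemma pm1N e : pm1 (- e) = pm1 e.
Proof. by rewrite /pm1 eqr_oppLR orbC eqr_oppLR opprK. Qed.

Lemma horizontal_addN_pm1 d e : horizontal d -> pm1 e -> ~~ horizontal (d + e).
Proof. by case/orP=> /eqP -> /orP[] /eqP ->. Qed.

Lemma addNE u d : addN u d = u + dir d.
Proof. by []. Qed.

Lemma dir_inj : injective dir.
Proof. by move=> a b /eqP; apply: contraTeq; case_I6 a; case_I6 b. Qed.

Lemma addN_inj u : injective (addN u).
Proof. by move=> a b; rewrite !addNE => /addrI /dir_inj. Qed.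

Lemma addN_addN u a b : addN (addN u a) b = u + (dir a + dir b).
Proof. by rewrite !addNE addrA. Qed.

Lemma addN_back u a : addN (addN u a) (a + 3) = u.
Proof.
rewrite addN_addN (_ : dir a + dir (a + 3) = 0) ?addr0 //.
by apply/eqP; case_I6 a.
Qed.

Lemma addN_turn u a e : pm1 e -> addN (addN u a) (a + e *+ 2) = addN u (a + e).
Proof.
move=> pe; rewrite addN_addN addNE; congr (_ + _); apply/eqP.
by case/orP: pe => /eqP ->; case_I6 a.
Qed.

Lemma adjP u w : reflect (exists d, w = addN u d) (adj u w).
Proof. by apply: (iffP existsP) => -[d /eqP]; exists d. Qed.

Lemma adj_addN_self u d : adj u (addN u d).
Proof. by apply/adjP; exists d. Qed.

Lemma adj_sym u v : adj u v -> adj v u.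
Proof. by case/adjP=> a ->; apply/adjP; exists (a + 3); rewrite addN_back. Qed.

Lemma dirTo_addN u d : dirTo u (addN u d) = d.
Proof.
rewrite /dirTo; case: pickP => [a | /(_ d)]; last by rewrite eqxx.
by rewrite eq_sym (inj_eq (@addN_inj u)) => /eqP.
Qed.

Lemma adj_dirTo u v : adj u v -> v = addN u (dirTo u v).
Proof. by case/adjP=> a ->; rewrite dirTo_addN. Qed.

Lemma adj_addN u a b : adj (addN u a) (addN u b) = (b == a + 1) || (b == a - 1).
Proof.
apply/adjP/idP => [[d] | /orP[] /eqP ->].
- rewrite addN_addN addNE => /addrI /eqP.
  by case_I6 a; case_I6 b; case_I6 d.
- by exists (a + 1 *+ 2); rewrite addN_turn.
- by exists (a + (-1) *+ 2); rewrite addN_turn // /pm1 eqxx orbT.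
Qed.

Lemma common_neighbour u d x : adj u x -> adj (addN u d) x ->
  x = addN u (d + 1) \/ x = addN u (d - 1).
Proof. by case/adjP=> a ->; rewrite adj_addN => /orP[] /eqP ->; [left | right]. Qed.

Definition sgn (s : bool) : 'I_6 := if s then 1 else -1.

Lemma pm1_sgn s : pm1 (sgn s).
Proof. by case: s; rewrite /pm1 eqxx ?orbT. Qed.

Lemma sgnN s : sgn (~~ s) = - sgn s.
Proof. by case: s; rewrite /sgn ?opprK. Qed.

Lemma rotNE c d s t : rotN c d s t = addN c (d + sgn s * t%:R).
Proof. by rewrite /rotN /sgn; case: s; rewrite ?mul1r ?mulN1r. Qed.

Lemma natr_pred6 m : (0 < m)%N -> (m.-1)%:R = m%:R - 1 :> 'I_6.
Proof. by move=> m1; rewrite -subn1 natrB. Qed.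

Lemma natr6 : 6%:R = 0 :> 'I_6.
Proof. exact: val_inj. Qed.

(** * Port numberings and chirality *)

Lemma neighbour_perm_I6 (pi : 'I_6 -> 'I_6) : injective pi -> pi 0 = 0 -> pi 3 = 3 ->
  (forall k, (pi (k + 1) == pi k + 1) || (pi (k + 1) == pi k - 1)) ->
  pm1 (pi 1) /\ forall k, pi k = pi 1 * k.
Proof.
move=> pi_inj pi0 pi3 pi_adj.
have adj k l : k + 1 == l -> (pi l == pi k + 1) || (pi l == pi k - 1).
  by move=> /eqP <-.
suff /and4P[e1 /eqP e2 /eqP e4 /eqP e5] :
    [&& pm1 (pi 1), pi 2 == pi 1 * 2, pi 4 == pi 1 * 4 & pi 5 == pi 1 * 5].
  split=> // k; rewrite -[k]natr_Zp; case: k => [[|[|[|[|[|[|?]]]]]] ?] //=.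
  - by rewrite mulr0 pi0.
  - by rewrite mulr1.
  - by rewrite pi3; case/orP: e1 => /eqP ->; apply/val_inj.
have : pi 2 != pi 4 by rewrite (inj_eq pi_inj).
move: (adj 0 1 isT) (adj 1 2 isT) (adj 2 3 isT).
move: (adj 3 4 isT) (adj 4 5 isT) (adj 5 0 isT).
rewrite pi0 pi3; move: (pi 1) (pi 2) (pi 4) (pi 5) => a1 a2 a4 a5.
by case_I6 a1; case_I6 a2; case_I6 a4; case_I6 a5.
Qed.

Definition chirality (pd : node -> 'I_6 -> 'I_6) (u : node) (e : 'I_6) : Prop :=
  pm1 e /\ forall k, pd u k = e * k.

Lemma configOK_chirality P pd u : configOK P pd -> u \in P -> exists e, chirality pd u e.
Proof.
case=> _ _ pd_inj pd03 pd_adj uP; have [pd0 pd3] := pd03 u uP.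
have adj k : (pd u (k + 1) == pd u k + 1) || (pd u (k + 1) == pd u k - 1).
  by have := pd_adj u uP k; rewrite /nbp adj_addN.
by exists (pd u 1); apply: neighbour_perm_I6 => //; apply: pd_inj.
Qed.

Section Chirality.
Variables (pd : node -> 'I_6 -> 'I_6) (u : node) (e : 'I_6).
Hypothesis chi : chirality pd u e.

Lemma nbp_chirality k : nbp pd u k = addN u (e * k).
Proof. by rewrite /nbp chi.2. Qed.

Lemma portTo_chirality d : portTo pd u (addN u d) = e * d.
Proof.
have ee : e * e = 1 by apply: pm1_sqr; case: chi.
rewrite /portTo; case: pickP => [k | /(_ (e * d))].
  by rewrite nbp_chirality (inj_eq (@addN_inj u)) => /eqP <-; rewrite mulrA ee mul1r.
by rewrite nbp_chirality mulrA ee mul1r eqxx.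
Qed.

End Chirality.

Lemma greyTest_chirality pd u d e e' : chirality pd u e -> chirality pd (addN u d) e' ->
  ~~ horizontal d -> greyTest pd u (addN u d) = (e == e').
Proof.
move=> chi chi'; rewrite /greyTest (portTo_chirality chi) -{2}(addN_back u d).
rewrite (portTo_chirality chi'); case: chi chi' => [+ _] [+ _].
by case/orP=> /eqP ->; case/orP=> /eqP ->; case_I6 d.
Qed.

(** * Boundaries of the whole configuration *)

Lemma isBoundary_at S occ B : isBoundary S occ B -> forall j,
  localBoundary S occ (bu B j) (bu B j.+1) (bo B j) /\
  exists (s : bool) (m : nat), (2 <= m <= 6)%N /\
    let c := bu B j.+1 in let d := dirTo c (bu B j) in
    [/\ rotN c d s 1 = bo B j, rotN c d s m.-1 = bo B j.+1,
        rotN c d s m = bu B j.+2 &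
        forall t, (1 <= t < m)%N -> ~~ occ c (rotN c d s t)].
Proof.
case=> B0 hB j; have := hB _ (ltn_pmod j B0).
by rewrite /bu /bo -[(j %% _).+2]addn2 -[(j %% _).+1]addn1 !modnDml addn1 addn2 modn_mod.
Qed.

Section FullBoundary.
Variable P : seq node.

Definition full_local_boundary (x : node * node * node) : bool :=
  localBoundary P (fullOcc P) x.1.1 x.1.2 x.2.

Lemma full_local_boundaryE u v o : full_local_boundary (u, v, o) =
  [&& u \in P, v \in P, adj u v, adj u o, adj v o & o \notin P].
Proof.
rewrite /full_local_boundary /localBoundary /fullOcc /=.
by case: (u \in P) (v \in P) (o \in P) => [] [] []; rewrite ?andbF ?andbT.
Qed.

Definition boundary_next (x : node * node * node) : node * node * node :=
  let: (u, v, o) := x in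
  let d := dirTo v u in let s := o == addN v (d + 1) in
  let m := (find (fun t => rotN v d s t \in P) (iota 1 6)).+1 in
  (v, rotN v d s m, rotN v d s m.-1).

Definition boundary_prev (x : node * node * node) : node * node * node :=
  let: (v, w, o) := x in
  let e := dirTo v w in let s := o == addN v (e - 1) in
  let m := (find (fun t => rotN v e (~~ s) t \in P) (iota 1 6)).+1 in
  (rotN v e (~~ s) m, v, rotN v e (~~ s) m.-1).

Lemma boundary_next_spec u v o : full_local_boundary (u, v, o) -> exists d s m,
  [/\ boundary_next (u, v, o) = (v, rotN v d s m, rotN v d s m.-1),
      u = addN v d, o = rotN v d s 1, (1 < m <= 6)%N &
      rotN v d s m \in P /\ forall t, (0 < t < m)%N -> rotN v d s t \notin P].
Proof.
rewrite full_local_boundaryE => /and3P[uP vP /and4P[auv auo /adjP[a oa] oP]].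
pose d := dirTo v u; pose s := o == addN v (d + 1).
have ud : u = addN v d by apply/adj_dirTo/adj_sym.
have o1 : o = rotN v d s 1.
  move: auo; rewrite /s rotNE mulr1 ud oa adj_addN (inj_eq (@addN_inj v)).
  have subB_addN (D : 'I_6) : (D - 1 == D + 1) = false by case_I6 D.
  by case/orP=> /eqP ->; rewrite ?eqxx ?subB_addN.
pose occ t := rotN v d s t \in P.
have occ6 : occ 6%N by rewrite /occ rotNE natr6 mulr0 addr0 -ud.
have [m6 occm before] := find_iota1 (isT : (0 < 6 <= 6)%N) occ6.
exists d, s, (find occ (iota 1 6)).+1; split => //.
rewrite m6 andbT ltn_neqAle eq_sym andbT.
by apply: contraTneq occm => ->; rewrite /occ -o1.
Qed.

Lemma full_local_boundary_next x :
  full_local_boundary x -> full_local_boundary (boundary_next x).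
Proof.
case: x => [[u v] o] x_lb.
have [d [s [m [-> ud o1 /andP[m1 m6] [wP free]]]]] := boundary_next_spec x_lb.
move: x_lb; rewrite !full_local_boundaryE => /and3P[_ vP _].
rewrite vP wP free ?(ltn_predK m1) ?andbT //; last by lia.
have pred_m : d + sgn s * (m.-1)%:R = (d + sgn s * m%:R) - sgn s.
  by rewrite natr_pred6 ?(ltnW m1) //; ring.
rewrite !rotNE pred_m !adj_addN_self adj_addN /=.
by case: (s); rewrite /sgn ?opprK eqxx ?orbT.
Qed.

Lemma boundary_nextK x : full_local_boundary x -> boundary_prev (boundary_next x) = x.
Proof.
case: x => [[u v] o] x_lb.
have [d [s [m [-> ud o1 /andP[m1 m6] [wP free]]]]] := boundary_next_spec x_lb.
have uP : u \in P by move: x_lb; rewrite full_local_boundaryE => /andP[].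
set D := d + sgn s * m%:R.
have wD : rotN v d s m = addN v D by rewrite rotNE.
have o'D : rotN v d s m.-1 = addN v (D - sgn s).
  by rewrite rotNE natr_pred6 ?(ltnW m1) // /D; congr addN; ring.
have back t : (t <= m)%N -> rotN v D (~~ s) t = rotN v d s (m - t).
  by move=> tm; rewrite !rotNE natrB // sgnN /D; congr addN; ring.
have s_back : (addN v (D - sgn s) == addN v (D - 1)) = s.
  have subN1 (D' : 'I_6) : (D' - -1 == D' - 1) = false by case_I6 D'.
  by rewrite (inj_eq (@addN_inj v)); case: (s); rewrite /sgn ?eqxx ?subN1.
have first : (find (fun t => rotN v D (~~ s) t \in P) (iota 1 6)).+1 = m.
  apply: find_iota1_first => [| | t /andP[t0 tm]] /=; first by lia.
  - by rewrite back // subnn rotNE mulr0 addr0 -ud.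
  - by rewrite back ?free //; lia.
rewrite /boundary_prev wD o'D dirTo_addN s_back first back // back; last by lia.
by rewrite subnn rotNE mulr0 addr0 -ud (_ : m - m.-1 = 1)%N -?o1 //; lia.
Qed.

Definition boundary_cycle (x : node * node * node) (k : nat) : seq (node * node) :=
  [seq ((iter i boundary_next x).1.1, (iter i boundary_next x).2) | i <- iota 0 k].

Lemma size_boundary_cycle x k : size (boundary_cycle x k) = k.
Proof. by rewrite size_map size_iota. Qed.

Lemma nth_boundary_cycle x k j : (0 < k)%N -> iter k boundary_next x = x ->
  nth (0, 0) (boundary_cycle x k) (j %% k) =
  ((iter j boundary_next x).1.1, (iter j boundary_next x).2).
Proof.
move=> k0 xk; have iter_qk q : iter (q * k) boundary_next x = x.
  by elim: q => // q IH; rewrite mulSn iterD IH xk.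
have iter_mod : iter (j %% k) boundary_next x = iter j boundary_next x.
  by rewrite [in RHS](divn_eq j k) addnC iterD iter_qk.
rewrite (nth_map 0%N) ?size_iota ?ltn_pmod //.
by rewrite nth_iota ?ltn_pmod // add0n iter_mod.
Qed.

Lemma isBoundary_boundary_cycle x k :
  full_local_boundary x -> (0 < k)%N -> iter k boundary_next x = x ->
  isBoundary P (fullOcc P) (boundary_cycle x k).
Proof.
move=> x_lb k0 xk; split; first by rewrite size_boundary_cycle.
move=> j _; rewrite /bu /bo size_boundary_cycle !nth_boundary_cycle //=.
have iter_lb i : full_local_boundary (iter i boundary_next x).
  by elim: i => //= i; apply: full_local_boundary_next.
have := iter_lb j.
case: (iter j boundary_next x) => [[u v] o] j_lb.
have [d [s [m [-> ud o1 hm [wP free]]]]] := boundary_next_spec j_lb.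
by split=> //=; exists s, m; split; rewrite // ud dirTo_addN -?o1.
Qed.

Lemma full_local_boundary_onBoundary u v o : full_local_boundary (u, v, o) ->
  onBoundary P (fullOcc P) u /\ onBoundary P (fullOcc P) v.
Proof.
move=> x_lb.
pose L := [seq (y, addN y.2 a) | y <- [seq (a, b) | a <- P, b <- P], a <- enum 'I_6].
have lb_L y : full_local_boundary y -> y \in L.
  case: y => [[a b] c]; rewrite full_local_boundaryE.
  case/and3P=> aP bP /and4P[_ _ /adjP[e ->] _].
  by apply: (allpairs_f (fun y e => (y, addN y.2 e))); rewrite ?mem_enum ?allpairs_f.
have [k k0 xk] := iter_periodic lb_L full_local_boundary_next boundary_nextK x_lb.
have onB j : onBoundary P (fullOcc P) (iter j boundary_next (u, v, o)).1.1.
  exists (boundary_cycle (u, v, o) k); split; first exact: isBoundary_boundary_cycle.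
  exists (j %% k)%N; first by rewrite size_boundary_cycle ltn_pmod.
  by rewrite /bu size_boundary_cycle modn_mod nth_boundary_cycle.
by split; [apply: (onB 0%N) | apply: (onB 1%N)].
Qed.

End FullBoundary.

(** * Forwarding along a boundary of a grey component *)

Section Configuration.
Variables (P : seq node) (pd : node -> 'I_6 -> 'I_6).
Hypothesis cfg : configOK P pd.

Lemma horizEdge_horizontal u d : horizEdge P pd u (addN u d) -> horizontal d.
Proof.
case: cfg => _ _ _ pd03 _ [uP wP _ _]; have [u0 u3] := pd03 _ uP; have [w0 w3] := pd03 _ wP.
rewrite /nbp u0 u3 w0 w3 /horizontal.
by case=> [/andP[/eqP/addN_inj <- _] | /andP[_ /eqP/addN_inj <-]]; rewrite eqxx ?orbT.
Qed.

Lemma horizEdge_of_horizontal u d : u \in P -> addN u d \in P ->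
  onBoundary P (fullOcc P) u -> onBoundary P (fullOcc P) (addN u d) ->
  horizontal d -> horizEdge P pd u (addN u d).
Proof.
move=> uP wP uB wB hd; split => //.
case: cfg => _ _ _ pd03 _; have [u0 u3] := pd03 _ uP; have [w0 w3] := pd03 _ wP.
have back0 := addN_back u 0; have back3 := addN_back u 3.
rewrite add0r in back0; rewrite (_ : 3 + 3 = 0 :> 'I_6) in back3; last exact: val_inj.
rewrite /nbp u0 u3 w0 w3; case/orP: hd => /eqP ->; [left | right].
  by rewrite back0 !eqxx.
by rewrite back3 !eqxx.
Qed.

Lemma lightBlue_horizontal u d : lightBlue P pd u (addN u d) -> horizontal d.
Proof. by case=> /horizEdge_horizontal. Qed.

Lemma lightBlue_common u d : lightBlue P pd u (addN u d) ->
  exists2 e, pm1 e & addN u (d + e) \in P.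
Proof.
case=> _; rewrite /ncommon => one.
have /hasP[x] : has (fun x => adj u x && adj (addN u d) x) (undup P) by rewrite has_count one.
rewrite mem_undup => xP /andP[ux dx].
case: (common_neighbour ux dx) => xE; [exists 1 | exists (-1)];
  by rewrite /pm1 ?eqxx ?orbT -?xE.
Qed.

Definition chiralityTest (v w : node) : bool :=
  let x := portTo pd v w in
  if `[< lightBlue P pd v w >] then
    let c := if nbp pd v (x + 1) \in P then nbp pd v (x + 1) else nbp pd v (x - 1) in
    greyTest pd v c == greyTest pd c w
  else greyTest pd v w.

Lemma chiralityTest_lightBlue v d e e' : chirality pd v e -> chirality pd (addN v d) e' ->
  lightBlue P pd v (addN v d) -> chiralityTest v (addN v d) = (e == e').
Proof.
move=> chi chi' lb; have hd := lightBlue_horizontal lb.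
have ee : e * e = 1 by apply: pm1_sqr; case: chi.
rewrite /chiralityTest asboolT // (portTo_chirality chi) !(nbp_chirality chi).
rewrite mulrDr mulrBr mulrA ee mul1r mulr1.
have [dl pdl [cP cE]] : exists2 dl, pm1 dl &
    (if addN v (d + e) \in P then addN v (d + e) else addN v (d - e)) \in P /\
    (if addN v (d + e) \in P then addN v (d + e) else addN v (d - e)) = addN v (d + dl).
  case: ifP => deP; first by exists e; case: chi.
  exists (- e); rewrite ?pm1N; [by case: chi | split => //].
  have [e0 pe0 de0P] := lightBlue_common lb.
  suff <- : e0 = - e by [].
  move: de0P deP; case: chi => + _; case/orP: pe0 => /eqP -> /orP[] /eqP ->;
    by rewrite ?opprK // => ->.
rewrite cE in cP *; have [ec chic] := configOK_chirality cfg cP.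
have turn : (d + dl) + (- dl) *+ 2 = d - dl by rewrite mulr2n; ring.
have wc : addN v d = addN (addN v (d + dl)) (d - dl) by rewrite -turn addN_turn ?pm1N // addrK.
rewrite (greyTest_chirality chi chic (horizontal_addN_pm1 hd pdl)).
rewrite wc in chi' *; rewrite (greyTest_chirality chic chi'); last first.
  by apply: horizontal_addN_pm1; rewrite ?pm1N.
case: chi chic chi' => + _ [+ _] [+ _].
by do 3 case/orP=> /eqP ->.
Qed.

End Configuration.

(* With [x = e * D], [i = e * (D - sg)] and [y = e' * (D + 3)], the rule of [step]
   yields the port of [w = v + dir D] towards [v + dir (D - sg)]. *)
Lemma forward_label e e' sg D : pm1 e -> pm1 e' -> pm1 sg ->
  (if ((e == e') && (e * (D - sg) == e * D - 1)) ||
      (~~ (e == e') && (e * (D - sg) == e * D + 1))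
   then e' * (D + 3) + 1 else e' * (D + 3) - 1) = e' * (D + (- sg) *+ 2).
Proof. by do 3 case/orP=> /eqP ->; apply/eqP; case_I6 D. Qed.

Section GreyComponent.
Variables (P : seq node) (pd : node -> 'I_6 -> 'I_6) (G : seq node).
Hypotheses (cfg : configOK P pd) (grey : greyComponent P pd G).

Local Notation occ := (occG P pd G).

Lemma local_boundary_outside v w a : localBoundary G occ v w (addN v a) ->
  ~~ horizontal a -> addN v a \notin P.
Proof.
case/and5P=> vG _ _ _ /and5P[_ va _ vo _] na; apply/negP => oP.
have not_dark : ~ darkBlue P pd v (addN v a).
  by case=> /(horizEdge_horizontal cfg) ha; rewrite ha in na.
case: grey => _ _ _ /(_ v _ vG oP va not_dark) oG.
by move: vo; rewrite /occG oG (asboolF not_dark).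
Qed.

Lemma lightBlue_of_local_boundary v d sg : pm1 sg ->
  localBoundary G occ v (addN v d) (addN v (d - sg)) -> horizontal d ->
  lightBlue P pd v (addN v d).
Proof.
move=> psg lb hd.
have o'P : addN v (d - sg) \notin P.
  by apply: local_boundary_outside lb _; apply: horizontal_addN_pm1; rewrite ?pm1N.
move: (lb) => /and5P[vG wG vw occ_vw /and5P[_ vo wo _ _]].
case: (grey) => _ GP _ _; have vP := GP _ vG; have wP := GP _ wG.
have [vB wB] : onBoundary P (fullOcc P) v /\ onBoundary P (fullOcc P) (addN v d).
  apply: (full_local_boundary_onBoundary (o := addN v (d - sg))).
  by rewrite full_local_boundaryE vP wP vw vo wo.
have he := horizEdge_of_horizontal cfg vP wP vB wB hd.
split => //; apply/eqP; rewrite eqn_leq; apply/andP; split.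
- rewrite /ncommon -size_filter.
  apply: (@uniq_leq_size _ _ [:: addN v (d + sg)]); first by rewrite filter_uniq ?undup_uniq.
  move=> x; rewrite mem_filter mem_undup inE => /andP[/andP[vx wx] xP]; apply/eqP.
  have [xE | xE] := common_neighbour vx wx; rewrite xE in xP *;
    by case/orP: psg o'P => /eqP ->; rewrite ?opprK ?xP.
- rewrite lt0n; apply/negP => /eqP none.
  by move: occ_vw; rewrite /occG (asboolT (conj he none)) andbF.
Qed.

Lemma chiralityTest_local_boundary v d sg e e' : pm1 sg ->
  localBoundary G occ v (addN v d) (addN v (d - sg)) ->
  chirality pd v e -> chirality pd (addN v d) e' ->
  chiralityTest P pd v (addN v d) = (e == e').
Proof.
move=> psg lb chi chi'.
have [blue | not_blue] := asboolP (lightBlue P pd v (addN v d)).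
  exact: chiralityTest_lightBlue.
have nh : ~~ horizontal d.
  by apply/negP => hd; apply: not_blue; apply: lightBlue_of_local_boundary lb hd.
by rewrite /chiralityTest asboolF // (greyTest_chirality chi chi').
Qed.

Lemma step_rotation v d sg m e e' : chirality pd v e -> pm1 sg -> (0 < m <= 6)%N ->
  occ v (addN v (d + sg * m%:R)) ->
  (forall t, (0 < t < m)%N -> ~~ occ v (addN v (d + sg * t%:R))) ->
  chirality pd (addN v (d + sg * m%:R)) e' ->
  chiralityTest P pd v (addN v (d + sg * m%:R)) = (e == e') ->
  step P pd G (addN v d, v, portTo pd v (addN v (d + sg))) =
  (v, addN v (d + sg * m%:R),
   portTo pd (addN v (d + sg * m%:R)) (addN v (d + sg * (m.-1)%:R))).
Proof.
move=> chi psg hm occ_w free; have ee : e * e = 1 by case: chi => /pm1_sqr.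
have portAt t : e * d + (e * (d + sg) - e * d) *+ t = e * (d + sg * t%:R).
  by rewrite -mulr_natr; ring.
have nbpAt t : nbp pd v (e * (d + sg * t%:R)) = addN v (d + sg * t%:R).
  by rewrite (nbp_chirality chi) mulrA ee mul1r.
rewrite /step !(portTo_chirality chi).
have -> : (find (fun t => occ v (nbp pd v (e * d + (e * (d + sg) - e * d) *+ t)))
    (iota 1 6)).+1 = m.
  by under eq_find do rewrite portAt nbpAt; apply: find_iota1_first.
rewrite !portAt nbpAt natr_pred6; last by case/andP: hm.
move: occ_w free; move Dm : (d + sg * m%:R) => D occ_w free chi' test.
have -> : d + sg * (m%:R - 1) = D - sg by rewrite -Dm; ring.
move: test; rewrite /chiralityTest (portTo_chirality chi) => ->.
rewrite -(addN_turn v D (e := - sg)) ?pm1N // (portTo_chirality chi').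
rewrite -[X in portTo _ _ X](addN_back v D) (portTo_chirality chi').
by case: chi chi' => [pe _] [pe' _]; rewrite forward_label.
Qed.

Lemma step_along_boundary B j : isBoundary G occ B ->
  step P pd G (bu B j, bu B j.+1, portTo pd (bu B j.+1) (bo B j)) =
  (bu B j.+1, bu B j.+2, portTo pd (bu B j.+2) (bo B j.+1)).
Proof.
move=> hB; have [lb [s [m [hm]]]] := isBoundary_at hB j.
have lb' := (isBoundary_at hB j.+1).1; move: lb lb'; cbv zeta.
set u := bu B j; set v := bu B j.+1; set w := bu B j.+2; set o' := bo B j.+1.
clearbody u v w o' => /and5P[uG vG uv _ _] lb' [<- o'E wE free].
have ud : u = addN v (dirTo v u) by apply/adj_dirTo/adj_sym.
move: (dirTo v u) ud free o'E wE => d -> free o'E wE.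
rewrite !rotNE in o'E wE; rewrite -wE -o'E in lb' *.
have [_ wG _ occ_vw _] := and5P lb'.
case: grey => _ GP _ _.
have [e chi] := configOK_chirality cfg (GP _ vG).
have [e' chi'] := configOK_chirality cfg (GP _ wG).
have m0 : (0 < m)%N by case/andP: hm => /ltnW.
have test : chiralityTest P pd v (addN v (d + sgn s * m%:R)) = (e == e').
  apply: chiralityTest_local_boundary chi chi'; first exact: pm1_sgn.
  have pred_m : d + sgn s * m.-1%:R = d + sgn s * m%:R - sgn s.
    by rewrite natr_pred6 //; ring.
  by rewrite -pred_m.
apply: step_rotation chi (pm1_sgn s) _ occ_vw _ chi' test.
- by case/andP: hm => /ltnW ->.
- by move=> t /free; rewrite rotNE.
Qed.

End GreyComponent.

Theorem theorem2 (P : seq node) (portDir : node -> 'I_6 -> 'I_6) (G : seq node) :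
  configOK P portDir ->
  greyComponent P portDir G ->
  forall B : seq (node * node),
    isBoundary G (occG P portDir G) B ->
    forall (i0 n : nat) (p p' o : node),
      bu B (i0 + n) = p -> bu B (i0 + n).+1 = p' -> bo B (i0 + n) = o ->
      traj P portDir G (initMsg portDir B i0) n = (p, p', portTo portDir p' o).
Proof.
move=> cfg grey B hB i0 n p p' o <- <- <-.
elim: n => [|n IH]; first by rewrite addn0.
by rewrite addnS /= IH (step_along_boundary cfg grey _ hB).
Qed.
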